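(* Let $P$ be a convex polygon with no two edges parallel, and let $e_s,e_t$ be edges with $e_s\preceq e_t$. Let $S$ be the set of pairs $(e_i,e_j)$ with $e_i\prec e_j$ and $e_i,e_j\in\{e_s,e_{s+1},\ldots,e_t\}$. Then every point $Z_i^j$ with $(e_i,e_j)\in S$ lies in $\rho=[v_{t+1}\circlearrowright v_s]$, and for $(e_i,e_j)\in S$ and $(e_{i'},e_{j'})\in S$: if $e_i\preceq e_{i'}$ and $e_j\preceq e_{j'}$, then $Z_i^j\le_\rho Z_{i'}^{j'}$.
   Context: $P$ is a compact convex polygon with boundary $\partial P$, edges $e_1,\ldots,e_n$ in clockwise order and vertices $v_1,\ldots,v_n$, $e_i$ the open segment from $v_i$ to $v_{i+1}$ (indices mod $n$); $e_s,e_{s+1},\ldots,e_t$ denotes the edges met going clockwise from $e_s$ to $e_t$. $\ell_i$ is the line containing $e_i$, $\mathsf{I}_{i,j}=\ell_i\cap\ell_j$. $\mathrm{disprod}_{l,l'}(X)=d_l(X)d_{l'}(X)$ where $d_l$ is distance to the line $l$. For distinct edges, $e_i\prec e_j$ means $\mathsf{I}_{i,j}=v_i+t(v_{i+1}-v_i)$ for some $t\ge1$ (equivalently the clockwise turning angle from direction $v_{i+1}-v_i$ to $v_{j+1}-v_j$ is in $(0,\pi)$); $e_i\preceq e_j$ means $e_i=e_j$ or $e_i\prec e_j$. For $e_i\prec e_j$, $Z_i^j$ is the unique point of $P$ maximizing $\mathrm{disprod}_{\ell_i,\ell_j}$ over $P$ (it lies on $\partial P$). $[X\circlearrowright X']$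 is the closed portion of $\partial P$ from $X$ clockwise to $X'$. For a boundary portion $\rho$ and $A,B\in\rho$, $A<_\rho B$ means $A$ is met before $B$ when traversing $\rho$ clockwise, and $A\le_\rho B$ means $A=B$ or $A<_\rho B$. *)

From HB Require Import structures.
From mathcomp Require Import all_boot all_order all_algebra.
Set Implicit Arguments. Unset Strict Implicit. Unset Printing Implicit Defensive.
Import Order.TTheory GRing.Theory Num.Theory.
Local Open Scope ring_scope.

(* Points of the plane are pairs (x, y); the standard orientation is used
   (x to the right, y upwards), so "clockwise" means negative turns. *)
Section Geo.
Variable R : rcfType.
Definition pt := (R * R)%type.

Definition padd (A B : pt) : pt := (A.1 + B.1, A.2 + B.2).
Definition psub (A B : pt) : pt := (A.1 - B.1, A.2 - B.2).
Definition pscale (c : R) (A : pt) : pt := (c * A.1, c * A.2).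
Definition cross (A B : pt) : R := A.1 * B.2 - A.2 * B.1.
Definition dot (A B : pt) : R := A.1 * B.1 + A.2 * B.2.

(* The polygon is given by n and v : nat -> pt; vertex v_i is v (i mod n)
   (0-based indices), edge e_i is the open segment from V i to V (i+1). *)
Variables (n : nat) (v : nat -> pt).
Definition V (i : nat) : pt := v (i %% n).
Definition dir (i : nat) : pt := psub (V i.+1) (V i).

(* convex polygon with vertices v_0,...,v_{n-1} in clockwise order:
   every other vertex lies strictly to the right of each directed edge *)
Definition convex_cw_polygon : Prop :=
  (3 <= n)%N /\
  forall i j, (i < n)%N -> (j < n)%N -> j != i -> j != (i.+1 %% n)%N ->
    cross (dir i) (psub (V j) (V i)) < 0.

Definition no_parallel_edges : Prop :=
  forall i j, (i < n)%N -> (j < n)%N -> i != j -> cross (dir i) (dir j) != 0.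

Definition inP (X : pt) : Prop :=
  forall i, (i < n)%N -> cross (dir i) (psub X (V i)) <= 0.

Definition on_line (i : nat) (X : pt) : Prop := cross (dir i) (psub X (V i)) = 0.

Definition dist_line (i : nat) (X : pt) : R :=
  `|cross (dir i) (psub X (V i))| / Num.sqrt (dot (dir i) (dir i)).

Definition disprod (i j : nat) (X : pt) : R := dist_line i X * dist_line j X.

Definition prec (i j : nat) : Prop :=
  i <> j /\ exists t : R, 1 <= t /\ on_line j (padd (V i) (pscale t (dir i))).

Definition preceq (i j : nat) : Prop := i = j \/ prec i j.

(* e_i is among e_s, e_{s+1}, ..., e_t (clockwise) *)
Definition in_range (s t i : nat) : Prop :=
  (i < n)%N /\ ((i + n - s) %% n <= (t + n - s) %% n)%N.

Definition inS (s t i j : nat) : Prop :=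
  prec i j /\ in_range s t i /\ in_range s t j.

Definition is_Z (i j : nat) (Z : pt) : Prop :=
  inP Z /\ forall X, inP X -> disprod i j X <= disprod i j Z.

(* Closed boundary portion from vertex V a clockwise through m edges,
   parametrized by arclength-index p in [0, m]: X lies on edge e_{a+k} at
   relative position lam, p = k + lam. *)
Definition arc_param (a m : nat) (X : pt) (p : R) : Prop :=
  exists (k : nat) (lam : R),
    0 <= lam /\ lam <= 1 /\ p = k%:R + lam /\ p <= m%:R /\
    X = padd (V (a + k)) (pscale lam (dir (a + k))).

(* rho = [v_{t+1} -> v_s] : start vertex t+1, number of edges from v_{t+1}
   clockwise to v_s *)
Definition rho_start (t : nat) : nat := t.+1.
Definition rho_len (s t : nat) : nat := ((s + n - t.+1) %% n)%N.

Definition on_rho (s t : nat) (X : pt) : Prop :=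
  exists p, arc_param (rho_start t) (rho_len s t) X p.

Definition rho_le (s t : nat) (A B : pt) : Prop :=
  exists pA pB, arc_param (rho_start t) (rho_len s t) A pA /\
                arc_param (rho_start t) (rho_len s t) B pB /\ pA <= pB.
End Geo.

(* For X in P let slack k X >= 0 be |e_k| times the distance from X to l_k, an affine
   function of X.  The maximizer Z of slack_i * slack_j is unique, and with a, b its two
   slacks the line b slack_i + a slack_j = 2ab supports P at Z.  Along the chain
   e_s, ..., e_t the edge directions turn clockwise by less than pi, so this affine
   function first decreases and then increases along the chain; its maximum over the
   chain can only be reached at the two ends v_s and v_(t+1), hence Z lies on rho.
   Along rho the ratio slack_w / slack_u is nondecreasing whenever e_u < e_w in the
   chain.  If Z_i'^j' came strictly before Z_i^j on rho, these ratios would let the two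
   optimality conditions be exchanged, making Z_i'^j' optimal for (i, j) as well, and
   uniqueness gives Z_i'^j' = Z_i^j. *)

From Pilot Require Import Defs.
From HB Require Import structures.
From mathcomp Require Import all_boot all_order all_algebra.
From mathcomp Require Import ring lra zify.
Set Implicit Arguments. Unset Strict Implicit. Unset Printing Implicit Defensive.
Import Order.TTheory GRing.Theory Num.Theory.
Local Open Scope ring_scope.

Section RealLemmas.
Variable R : realFieldType.

Lemma nonpos_of_first_order (a q : R) :
  (forall e, 0 < e -> e <= 1 -> e * a + e ^+ 2 * q <= 0) -> a <= 0.
Proof.
move=> h; rewrite leNgt; apply/negP => a_gt0.
have q_ge : - q <= `|q| by rewrite -normrN ler_norm.
have aq_gt0 : 0 < a + `|q| by have := normr_ge0 q; lra.
pose e := a / (a + `|q|).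
have eaq : e * (a + `|q|) = a by rewrite /e divfK ?gt_eqF.
have e_gt0 : 0 < e by rewrite divr_gt0.
have e_le1 : e <= 1 by rewrite ler_pdivrMr //; have := normr_ge0 q; lra.
have eq_e : e * (e * `|q|) = e * a - e * e * a.
  have -> : e * `|q| = a - e * a by lra.
  ring.
have : 0 <= (e * e) * (q + `|q|) by apply: mulr_ge0; nra.
have : 0 < e * e * a by do 2 apply: mulr_gt0 => //.
have := h e e_gt0 e_le1; rewrite expr2; lra.
Qed.

Lemma exists_small_step (N : nat) (a b : nat -> R) :
  (forall m, (m < N)%N -> 0 < a m) ->
  exists2 e, 0 < e & forall m, (m < N)%N -> 0 <= a m + e * b m.
Proof.
elim: N => [|N IH] a_gt0; first by exists 1.
have [e e_gt0 He] : exists2 e, 0 < e & forall m, (m < N)%N -> 0 <= a m + e * b m.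
  by apply: IH => m ltmN; apply: a_gt0; lia.
have aN := a_gt0 N (ltnSn N).
have b_ge : - b N <= `|b N| by rewrite -normrN ler_norm.
have b1_gt0 : 0 < `|b N| + 1 by have := normr_ge0 (b N); lra.
pose c := a N / (`|b N| + 1).
have cb : c * (`|b N| + 1) = a N by rewrite /c divfK ?gt_eqF.
have c_gt0 : 0 < c by rewrite divr_gt0.
exists (Num.min e c) => [|m]; first by rewrite lt_min e_gt0.
have mc : Num.min e c <= c by rewrite ge_min lexx orbT.
have me : Num.min e c <= e by rewrite ge_min lexx.
have min_gt0 : 0 < Num.min e c by rewrite lt_min e_gt0.
rewrite ltnS leq_eqVlt => /predU1P [->|ltmN]; first by nra.
have := He m ltmN; have := a_gt0 m (ltnW ltmN); nra.
Qed.

Section Unimodal.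
Variables (g sg : nat -> R) (c : R) (L : nat).
Hypotheses (g_succ : forall m, g m.+1 = g m + sg m) (g_le : forall m, g m <= c).
Hypotheses (sg0_lt0 : sg 0 < 0) (sgL_gt0 : 0 < sg L).
Hypothesis sg_gt0_succ : forall m, (0 < m < L)%N -> 0 <= sg m -> 0 < sg m.+1.

Lemma unimodal_forward m : (0 < m <= L)%N -> g m < g 0 \/ 0 < sg m.
Proof.
elim: m => [//|m IH] /andP [_ leSmL].
case: m IH leSmL => [_ _|m IH leSmL]; first by left; rewrite g_succ; move: sg0_lt0; lra.
have [sgm_ge0|sgm_lt0] := lerP 0 (sg m.+1).
  by right; apply: sg_gt0_succ => //; lia.
have [gm_lt|] := IH ltac:(lia); last by lra.
by left; rewrite g_succ; lra.
Qed.

Lemma unimodal_backward d m : (m + d = L)%N -> (0 < m)%N -> 0 < sg m -> g m < g L.+1.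
Proof.
elim: d m => [|d IH] m mdL m_gt0 sgm_gt0.
  by rewrite addn0 in mdL; rewrite -mdL g_succ; lra.
have := IH m.+1 ltac:(lia) isT (@sg_gt0_succ m ltac:(lia) (ltW sgm_gt0)).
by rewrite g_succ; lra.
Qed.

Lemma unimodal_interior_lt m : (0 < m <= L)%N -> g m < c.
Proof.
move=> mL; have := g_le 0; have := g_le L.+1.
case: (unimodal_forward mL) => [|sgm_gt0]; first by lra.
have := @unimodal_backward (L - m) m ltac:(lia) ltac:(lia) sgm_gt0; lra.
Qed.

Lemma unimodal_max_at_ends (r : nat) (l : R) :
  (r <= L)%N -> 0 <= l -> l <= 1 -> g r + l * sg r = c ->
  (r = 0%N /\ l = 0) \/ (r = L /\ l = 1).
Proof.
move=> rL l_ge0 l_le1 gr_c.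
case: r rL gr_c => [|r] rL gr_c.
  left; split => //; have := g_le 0; move: sg0_lt0; nra.
have gr_lt := unimodal_interior_lt (m := r.+1) ltac:(lia).
have gr1 := g_le r.+2; rewrite g_succ in gr1.
have l1 : l = 1 by nra.
right; split => //; apply/eqP; rewrite eqn_leq rL /=; apply/negP => ltrL.
have := unimodal_interior_lt (m := r.+2) ltac:(lia); rewrite g_succ -gr_c l1 mul1r; lra.
Qed.

End Unimodal.

Lemma eq_of_prod_eq_supporting (a b a' b' : R) :
  0 < a -> 0 < b -> 0 <= a' -> 0 <= b' -> a' * b' = a * b ->
  b * a' + a * b' <= 2 * (a * b) -> a' = a /\ b' = b.
Proof.
move=> a_gt0 b_gt0 a'_ge0 b'_ge0 prod_eq supp.
have cross_eq : a * b' = a' * b.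
  have sq_le0 : (a * b' - a' * b) ^+ 2 <= 0.
    have -> : (a * b' - a' * b) ^+ 2 = (a * b' + a' * b) ^+ 2 - 4 * (a' * b') * (a * b) by ring.
    have S_ge0 : 0 <= a * b' + a' * b by apply: addr_ge0; apply: mulr_ge0; lra.
    have S_le : a * b' + a' * b <= 2 * (a * b) by lra.
    have := ler_pM S_ge0 S_ge0 S_le S_le.
    rewrite prod_eq !expr2; lra.
  by apply/eqP; rewrite -subr_eq0 -sqrf_eq0 eq_le sq_le0 sqr_ge0.
have a'_eq : a' = a.
  have : (a' - a) * ((a' + a) * b) = 0.
    have -> : (a' - a) * ((a' + a) * b) = a' * (a' * b) - a * (a * b) by ring.
    by rewrite -cross_eq -prod_eq; ring.
  move/eqP; rewrite mulf_eq0 => /orP [/eqP|/eqP prod0]; first by lra.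
  have : 0 < (a' + a) * b by apply: mulr_gt0; lra.
  by rewrite prod0 ltxx.
split=> //; apply: (mulfI (lt0r_neq0 a_gt0)); rewrite cross_eq a'_eq; ring.
Qed.

Lemma prod_eq_of_exchange (p q p' q' P Q P' Q' : R) :
  0 <= p -> 0 <= q -> 0 <= p' -> 0 <= q' -> 0 <= P' -> 0 <= Q' ->
  0 < P' * Q' -> p' * q' <= p * q -> P * Q <= P' * Q' ->
  P' * p <= P * p' -> Q' * q <= Q * q' -> p' * q' = p * q.
Proof.
move=> p0 q0 p'0 q'0 P'0 Q'0 PQ'_gt0 le_pq le_PQ le_p le_q.
have := ler_pM (mulr_ge0 P'0 p0) (mulr_ge0 Q'0 q0) le_p le_q.
have -> : P' * p * (Q' * q) = (P' * Q') * (p * q) by ring.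
have -> : P * p' * (Q * q') = (P * Q) * (p' * q') by ring.
move=> le_prod; apply/le_anti; rewrite le_pq /=.
rewrite -(ler_pM2l PQ'_gt0); apply: (le_trans le_prod).
by apply: ler_wpM2r => //; apply: mulr_ge0.
Qed.

End RealLemmas.

Section Vectors.
Variable R : rcfType.
Implicit Types (a d w x y z P Q X Z : pt R) (c : R).

Lemma cross_swap x y : cross y x = - cross x y.
Proof. rewrite /cross; ring. Qed.

Lemma cross_self x : cross x x = 0.
Proof. rewrite /cross; ring. Qed.

Lemma cross_paddl x y z : cross (padd x y) z = cross x z + cross y z.
Proof. rewrite /cross /=; ring. Qed.

Lemma cross_psubl x y z : cross (psub x y) z = cross x z - cross y z.
Proof. rewrite /cross /=; ring. Qed.

Lemma cross_pscalel c x y : cross (pscale c x) y = c * cross x y.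
Proof. rewrite /cross /=; ring. Qed.

Lemma cross_paddr x y z : cross x (padd y z) = cross x y + cross x z.
Proof. rewrite /cross /=; ring. Qed.

Lemma cross_pscaler c x y : cross x (pscale c y) = c * cross x y.
Proof. rewrite /cross /=; ring. Qed.

Lemma cross_plucker a x y z :
  cross a y * cross x z = cross a x * cross y z + cross a z * cross x y.
Proof. rewrite /cross; ring. Qed.

Lemma cross_halfplane_trans a x y z :
  cross a x < 0 -> cross a y < 0 -> cross a z < 0 ->
  cross x y <= 0 -> cross y z < 0 -> cross x z < 0.
Proof.
move=> ax ay az xy yz; have := cross_plucker a x y z.
have : 0 < cross a x * cross y z by rewrite nmulr_rgt0.
have : 0 <= cross a z * cross x y by rewrite nmulr_rge0.
nra.
Qed.

Lemma cross_cone e1 e2 w d :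
  cross e1 e2 < 0 -> 0 <= cross w e1 -> 0 <= cross w e2 ->
  cross e1 d <= 0 -> 0 <= cross e2 d -> 0 <= cross w d.
Proof.
move=> e12 we1 we2 e1d e2d; have := cross_plucker e1 w e2 d.
rewrite [cross e1 w]cross_swap.
have : 0 <= cross w e1 * cross e2 d by apply: mulr_ge0.
have : 0 <= cross w e2 * - cross e1 d by apply: mulr_ge0; lra.
nra.
Qed.

Lemma dot_self_gt0 x y : cross x y != 0 -> 0 < dot x x.
Proof.
case: x y => [x1 x2] [y1 y2]; rewrite /cross /dot /= => xy_neq0.
rewrite ltNge; apply: contra xy_neq0 => le0.
have := sqr_ge0 x1; have := sqr_ge0 x2; rewrite !expr2 => h2 h1.
have : x1 * x1 == 0 by rewrite eq_le h1 andbT; lra.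
have : x2 * x2 == 0 by rewrite eq_le h2 andbT; lra.
by rewrite !mulf_eq0 !orbb => /eqP -> /eqP ->; rewrite !mul0r subrr.
Qed.

Lemma eq_of_cross_psub_eq0 d d' Z Z' :
  cross d d' != 0 -> cross (psub Z Z') d = 0 -> cross (psub Z Z') d' = 0 -> Z = Z'.
Proof.
case: d d' Z Z' => [d1 d2] [e1 e2] [z1 z2] [y1 y2].
rewrite /cross /psub /= => dd' h h'.
have E1 : (d1 * e2 - d2 * e1) * (z1 - y1) = 0.
  have -> : (d1 * e2 - d2 * e1) * (z1 - y1) =
    d1 * ((z1 - y1) * e2 - (z2 - y2) * e1) - e1 * ((z1 - y1) * d2 - (z2 - y2) * d1) by ring.
  by rewrite h h' !mulr0 subrr.
have E2 : (d1 * e2 - d2 * e1) * (z2 - y2) = 0.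
  have -> : (d1 * e2 - d2 * e1) * (z2 - y2) =
    d2 * ((z1 - y1) * e2 - (z2 - y2) * e1) - e2 * ((z1 - y1) * d2 - (z2 - y2) * d1) by ring.
  by rewrite h h' !mulr0 subrr.
move/eqP: E1 E2; rewrite mulf_eq0 (negbTE dd') subr_eq0 => /eqP ->.
by move/eqP; rewrite mulf_eq0 (negbTE dd') subr_eq0 => /eqP ->.
Qed.

Lemma on_line_decomp d P Z :
  0 < dot d d -> cross (psub Z P) d = 0 -> exists c, Z = padd P (pscale c d).
Proof.
move=> dd h; pose c := dot d (psub Z P) / dot d d; exists c.
have cross_perp x : cross x (- d.2, d.1) = dot d x by rewrite /cross /dot /=; ring.
apply: (@eq_of_cross_psub_eq0 d (- d.2, d.1)); first by rewrite cross_perp lt0r_neq0.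
  by rewrite cross_psubl cross_paddl cross_pscalel cross_self mulr0 addr0 -cross_psubl.
rewrite cross_psubl cross_paddl cross_pscalel !cross_perp /c divfK ?lt0r_neq0 //.
by rewrite /dot /psub /=; ring.
Qed.

End Vectors.

Lemma rho_lenE (n s t : nat) : (s < n)%N -> (t < n)%N ->
  rho_len n s t = (n.-1 - (t + n - s) %% n)%N.
Proof.
rewrite /rho_len => lt_sn lt_tn; have [le_st|lt_ts] := leqP s t.
  by rewrite (_ : t + n - s = t - s + n)%N ?modnDr ?modn_small //; lia.
by rewrite (_ : s + n - t.+1 = s - t.+1 + n)%N ?modnDr ?modn_small //; lia.
Qed.

Lemma add_shift_mod n s k : (s < n)%N -> s + (k + n - s) %% n = k %[mod n].
Proof. by move=> lt_sn; rewrite modnDmr subnKC ?modnDr //; lia. Qed.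

Section Polygon.
Variables (R : rcfType) (n : nat) (v : nat -> pt R).
Local Notation V := (V n v).
Local Notation dir := (dir n v).
Local Notation inP := (inP n v).
Implicit Types (X Z w : pt R) (l : R).

Definition slack k X : R := cross (psub X (V k)) (dir k).

Definition edge_pt k l : pt R := padd (V k) (pscale l (dir k)).

Definition pconv l X Z : pt R := padd X (pscale l (psub Z X)).

Definition maximizes i j Z :=
  inP Z /\ forall X, inP X -> slack i X * slack j X <= slack i Z * slack j Z.

Definition ratio_le (u w : nat) X Y := slack w X * slack u Y <= slack w Y * slack u X.

Lemma V_eqmod x y : x = y %[mod n] -> V x = V y.
Proof. by rewrite /Defs.V => ->. Qed.

Lemma dir_eqmod x y : x = y %[mod n] -> dir x = dir y.
Proof.
move=> xy; rewrite /Defs.dir (V_eqmod xy); congr psub; apply: V_eqmod.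
by rewrite -addn1 -modnDml xy modnDml addn1.
Qed.

Lemma slack_eqmod x y X : x = y %[mod n] -> slack x X = slack y X.
Proof. by move=> xy; rewrite /slack (V_eqmod xy) (dir_eqmod xy). Qed.

Lemma V_succ x : V x.+1 = padd (V x) (dir x).
Proof. by rewrite /Defs.dir /padd /psub /=; case: (V x.+1) => a b /=; rewrite !subrKC. Qed.

Lemma slack_padd k X w : slack k (padd X w) = slack k X + cross w (dir k).
Proof. by rewrite /slack /cross /=; ring. Qed.

Lemma slack_pconv k l X Z : slack k (pconv l X Z) = (1 - l) * slack k X + l * slack k Z.
Proof. by rewrite /slack /pconv /cross /=; ring. Qed.

Lemma cross_psub_dir k X Z : cross (psub X Z) (dir k) = slack k X - slack k Z.
Proof. by rewrite /slack /cross /=; ring. Qed.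

Lemma slack_V_self k : slack k (V k) = 0.
Proof. by rewrite /slack /cross /=; ring. Qed.

Lemma slack_V_succ k m : slack k (V m.+1) = slack k (V m) + cross (dir m) (dir k).
Proof. by rewrite V_succ slack_padd. Qed.

Lemma slack_V_succ_self k : slack k (V k.+1) = 0.
Proof. by rewrite slack_V_succ slack_V_self cross_self addr0. Qed.

Lemma slack_edge_pt k a l :
  slack k (edge_pt a l) = slack k (V a) + l * cross (dir a) (dir k).
Proof. by rewrite slack_padd cross_pscalel. Qed.

Lemma edge_pt0 a : edge_pt a 0 = V a.
Proof. by rewrite /edge_pt /pscale /padd !mul0r !addr0; case: (V a). Qed.

Lemma edge_pt1 a : edge_pt a 1 = V a.+1.
Proof. by rewrite V_succ /edge_pt /pscale !mul1r; case: (dir a). Qed.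

Lemma slack_ge0 k X : (0 < n)%N -> inP X -> 0 <= slack k X.
Proof.
move=> n_gt0 XP; rewrite (@slack_eqmod k (k %% n)) ?modn_mod // /slack cross_swap.
by rewrite oppr_ge0; apply: XP; rewrite ltn_pmod.
Qed.

Lemma inP_of_slack X : (forall k, (k < n)%N -> 0 <= slack k X) -> inP X.
Proof. by move=> h k lt_kn; have := h k lt_kn; rewrite /slack cross_swap oppr_ge0. Qed.

Lemma inP_pconv l X Z :
  (0 < n)%N -> 0 <= l -> l <= 1 -> inP X -> inP Z -> inP (pconv l X Z).
Proof.
move=> n_gt0 l_ge0 l_le1 XP ZP; apply: inP_of_slack => k _; rewrite slack_pconv.
by apply: addr_ge0; apply: mulr_ge0; rewrite ?slack_ge0 //; lra.
Qed.

Lemma arc_param_eqmod a a' m X p :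
  a = a' %[mod n] -> arc_param n v a m X p -> arc_param n v a' m X p.
Proof.
move=> aa' [k [lam [? [? [? [? ->]]]]]]; exists k, lam; do 4!split => //.
have aka'k : a + k = a' + k %[mod n] by rewrite -modnDml aa' modnDml.
by rewrite (V_eqmod aka'k) (dir_eqmod aka'k).
Qed.

Lemma arc_param_edge_pt a m k l :
  (k < m)%N -> 0 <= l -> l <= 1 -> arc_param n v a m (edge_pt (a + k) l) (k%:R + l).
Proof.
move=> lt_km l_ge0 l_le1; exists k, l; do 4!split => //.
by move: lt_km; rewrite -(ler_nat R) -natr1; lra.
Qed.

Lemma arc_param_normal a m X p : (0 < m)%N -> arc_param n v a m X p ->
  exists k l, [/\ (k < m)%N, 0 <= l, l <= 1, p = k%:R + l & X = edge_pt (a + k) l].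
Proof.
move=> m_gt0 [k [l [l_ge0 [l_le1 [pe [pm ->]]]]]].
have [lt_km|le_mk] := ltnP k m; first by exists k, l.
have km : (k%:R : R) <= m%:R by move: pm; rewrite pe; lra.
have eq_km : k = m by apply/eqP; rewrite eqn_leq le_mk andbT -(ler_nat R).
have l0 : l = 0 by move: pm; rewrite pe eq_km; lra.
exists m.-1, 1; split => //; first by rewrite prednK.
  by rewrite pe eq_km l0 natr1 prednK // addr0.
change (edge_pt (a + k) l = edge_pt (a + m.-1) 1).
by rewrite edge_pt1 -addnS prednK // eq_km l0 edge_pt0.
Qed.

Lemma inS_diag_empty s i j : (s < n)%N -> ~ inS n v s s i j.
Proof.
move=> lt_sn [[neq_ij _] [[lt_in ri] [lt_jn rj]]]; apply: neq_ij.
have pos0 k : (k < n)%N -> ((k + n - s) %% n <= (s + n - s) %% n)%N -> k = s.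
  move=> lt_kn; rewrite (_ : s + n - s = n)%N ?modnn ?leqn0; last by lia.
  move=> /eqP k0; have := add_shift_mod k lt_sn.
  by rewrite k0 addn0 !modn_small.
by rewrite (pos0 i lt_in ri) (pos0 j lt_jn rj).
Qed.

Lemma ratio_le_trans (u w : nat) X Y Z :
  0 < slack u Y -> 0 <= slack u X -> 0 <= slack u Z ->
  ratio_le u w X Y -> ratio_le u w Y Z -> ratio_le u w X Z.
Proof.
rewrite /ratio_le => Y_gt0 X_ge0 Z_ge0 XY YZ.
rewrite -(ler_pM2r Y_gt0).
have := ler_wpM2r Z_ge0 XY; have := ler_wpM2r X_ge0 YZ; lra.
Qed.

Section Convex.
Hypothesis convex : convex_cw_polygon n v.

Lemma n_gt2 : (2 < n)%N.
Proof. by case: convex. Qed.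

Lemma n_gt0 : (0 < n)%N.
Proof. by have := n_gt2; lia. Qed.

Lemma slack_V_gt0 k m :
  m != k %[mod n] -> m != k.+1 %[mod n] -> 0 < slack k (V m).
Proof.
move=> mk mk1; have [_ H] := convex.
have Sk : (k %% n).+1 = k.+1 %[mod n] by rewrite -addn1 modnDml addn1.
have := H (k %% n)%N (m %% n)%N (ltn_pmod _ n_gt0) (ltn_pmod _ n_gt0) mk.
rewrite Sk => /(_ mk1).
rewrite (@V_eqmod (m %% n)%N m) ?modn_mod // (@slack_eqmod k (k %% n)%N) ?modn_mod //.
by rewrite /slack cross_swap oppr_lt0.
Qed.

Lemma slack_V_ge0 k m : 0 <= slack k (V m).
Proof.
have [mk|mk] := eqVneq (m %% n)%N (k %% n)%N.
  by rewrite (V_eqmod mk) slack_V_self.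
have [mk1|mk1] := eqVneq (m %% n)%N (k.+1 %% n)%N.
  by rewrite (V_eqmod mk1) slack_V_succ_self.
exact/ltW/slack_V_gt0.
Qed.

Lemma slack_V_add_gt0 k a : (1 < a < n)%N -> 0 < slack k (V (k + a)).
Proof.
move=> a_bd; apply: slack_V_gt0.
  by rewrite -{2}[k]addn0 eqn_modDl !modn_small //; lia.
by rewrite -addn1 eqn_modDl !modn_small //; lia.
Qed.

Lemma inP_V m : inP (V m).
Proof. by apply: inP_of_slack => k _; apply: slack_V_ge0. Qed.

Lemma inP_edge_pt a l : 0 <= l -> l <= 1 -> inP (edge_pt a l).
Proof.
move=> l_ge0 l_le1; have -> : edge_pt a l = pconv l (V a) (V a.+1) by [].
exact: inP_pconv n_gt0 l_ge0 l_le1 (inP_V _) (inP_V _).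
Qed.

Lemma cross_dir_succ_lt0 m : cross (dir m) (dir m.+1) < 0.
Proof.
have := @slack_V_add_gt0 m 2 ltac:(have := n_gt2; lia).
by rewrite addn2 slack_V_succ slack_V_succ_self add0r cross_swap oppr_gt0.
Qed.

Lemma dot_dir_gt0 k : 0 < dot (dir k) (dir k).
Proof. exact: (dot_self_gt0 (ltr0_neq0 (cross_dir_succ_lt0 k))). Qed.

Lemma cross_dir_pred_lt0 k : cross (dir (k + n.-1)) (dir k) < 0.
Proof.
have pred_succ : (k + n.-1).+1 = k %[mod n].
  by rewrite -addnS prednK ?n_gt0 // modnDr.
by rewrite -(dir_eqmod pred_succ) cross_dir_succ_lt0.
Qed.

Lemma slack_min_at_vertex k x X :
  inP X -> slack k (V x.+1) <= slack k (V x) -> slack k (V x.+1) <= slack k (V x.+2) ->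
  slack k (V x.+1) <= slack k X.
Proof.
move=> XP dec inc; rewrite -subr_ge0.
have -> : slack k X - slack k (V x.+1) = cross (psub X (V x.+1)) (dir k).
  by rewrite /slack /cross /=; ring.
apply: (cross_cone (cross_dir_succ_lt0 x)).
- have -> : cross (psub X (V x.+1)) (dir x) = slack x X.
    by rewrite V_succ /slack /cross /=; ring.
  exact: slack_ge0 n_gt0 XP.
- exact: slack_ge0 n_gt0 XP.
- by move: dec; rewrite slack_V_succ; lra.
- by move: inc; rewrite (slack_V_succ k x.+1); lra.
Qed.

Lemma cross_dir_gt0_succ k m :
  (0 < m)%N -> (m.+1 < n)%N -> 0 < cross (dir k) (dir (k + m)) ->
  0 < cross (dir k) (dir (k + m.+1)).
Proof.
move=> m_gt0 lt_m1n turn; rewrite ltNge; apply/negP => no_turn.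
(* V (k + m.+1) would minimize slack k over P, but slack k (V k) = 0 is smaller. *)
have := slack_V_add_gt0 k (a := m.+1) ltac:(lia).
have := @slack_min_at_vertex k (k + m) (V k) (inP_V k).
rewrite slack_V_self !addnS (slack_V_succ k (k + m).+1) (slack_V_succ k (k + m)).
rewrite !(cross_swap (dir k)); rewrite addnS in no_turn; lra.
Qed.

Lemma cross_dir_gt0_mono k p q :
  (0 < p <= q)%N -> (q < n)%N -> 0 < cross (dir k) (dir (k + p)) ->
  0 < cross (dir k) (dir (k + q)).
Proof.
elim: q => [|q IH] pq lt_qn turn_p; first by lia.
have [<- //|neq_pq] := eqVneq p q.+1.
by apply: cross_dir_gt0_succ; [lia | done | apply: IH => //; lia].
Qed.

Lemma cross_dir_wrap s p q k :
  (p <= q < k)%N -> (k < n)%N -> cross (dir (s + p)) (dir (s + k)) < 0 ->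
  0 < cross (dir (s + k)) (dir (s + q)).
Proof.
move=> pqk lt_kn turn.
have shift r : (r < k)%N -> dir (s + k + (n - k + r)) = dir (s + r).
  by move=> lt_rk; apply: dir_eqmod; rewrite -(modnDr (s + r)); congr modn; lia.
rewrite -(shift q); last by lia.
apply: (@cross_dir_gt0_mono _ (n - k + p)); [lia | lia |].
by rewrite shift 1?cross_swap ?oppr_gt0 //; lia.
Qed.

Lemma on_edge k Z : inP Z -> slack k Z = 0 ->
  exists l, [/\ 0 <= l, l <= 1 & Z = edge_pt k l].
Proof.
move=> ZP Zk; have [l eqZ] := on_line_decomp (dot_dir_gt0 k) Zk.
exists l; rewrite eqZ in ZP *; split => //.
- have := slack_ge0 (k + n.-1) n_gt0 ZP; rewrite slack_padd cross_pscalel.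
  have pred_succ : k = (k + n.-1).+1 %[mod n].
    by rewrite -addnS prednK ?n_gt0 // modnDr.
  rewrite (V_eqmod pred_succ) slack_V_succ_self add0r cross_swap.
  by have := cross_dir_pred_lt0 k; nra.
- have := slack_ge0 k.+1 n_gt0 ZP; rewrite slack_padd cross_pscalel.
  have := slack_V_succ k.+1 k; rewrite slack_V_self.
  by have := cross_dir_succ_lt0 k; nra.
Qed.

Lemma dist_line_slack k X :
  inP X -> dist_line n v k X = slack k X / Num.sqrt (dot (dir k) (dir k)).
Proof.
move=> XP; rewrite /dist_line -normrN -cross_swap ger0_norm //.
exact: slack_ge0 n_gt0 XP.
Qed.

Lemma maximizes_of_is_Z i j Z : is_Z n v i j Z -> maximizes i j Z.
Proof.
move=> [ZP Zmax]; split=> // X XP; have := Zmax X XP.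
rewrite /disprod !dist_line_slack // !mulf_div.
by rewrite ler_pM2r // invr_gt0 mulr_gt0 // sqrtr_gt0 dot_dir_gt0.
Qed.

Section Maximizer.
Variables (i j : nat) (Z : pt R).
Hypothesis Zmax : maximizes i j Z.

Lemma maximizer_slack_gt0 : 0 < slack i Z /\ 0 < slack j Z.
Proof.
have [ZP Zmax'] := Zmax.
pose X := pconv (1 / 2) (V (i + 2)) (V (j + 2)).
have n_gt2 := n_gt2.
have Xi : 0 < slack i X.
  rewrite slack_pconv; have := slack_V_add_gt0 i (a := 2) ltac:(lia).
  have := slack_V_ge0 i (j + 2); lra.
have Xj : 0 < slack j X.
  rewrite slack_pconv; have := slack_V_add_gt0 j (a := 2) ltac:(lia).
  have := slack_V_ge0 j (i + 2); lra.
have XP : inP X by apply: inP_pconv n_gt0 _ _ (inP_V _) (inP_V _); lra.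
have prod_gt0 : 0 < slack i Z * slack j Z.
  exact: lt_le_trans (mulr_gt0 Xi Xj) (Zmax' X XP).
have Zi := slack_ge0 i n_gt0 ZP; have Zj := slack_ge0 j n_gt0 ZP.
split; rewrite lt_def ?Zi ?Zj andbT; apply: contraTneq prod_gt0 => ->;
  by rewrite ?mul0r ?mulr0 ltxx.
Qed.

Lemma maximizer_supporting X : inP X ->
  slack j Z * slack i X + slack i Z * slack j X <= 2 * (slack i Z * slack j Z).
Proof.
move=> XP; have [ZP Zmax'] := Zmax.
set a := slack i Z; set b := slack j Z; set x := slack i X; set y := slack j X.
suff : b * (x - a) + a * (y - b) <= 0 by lra.
apply: (@nonpos_of_first_order _ _ ((x - a) * (y - b))) => e e_gt0 e_le1.
have := Zmax' _ (inP_pconv n_gt0 (ltW e_gt0) e_le1 ZP XP).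
rewrite !slack_pconv -/a -/b -/x -/y.
have -> : ((1 - e) * a + e * x) * ((1 - e) * b + e * y) =
  a * b + (e * (b * (x - a) + a * (y - b)) + e ^+ 2 * ((x - a) * (y - b))) by ring.
lra.
Qed.

Hypothesis nonparallel_ij : cross (dir i) (dir j) != 0.

Lemma maximizer_on_boundary : exists2 k, (k < n)%N & slack k Z = 0.
Proof.
have [ZP _] := Zmax.
case: (boolP [exists k : 'I_n, slack k Z == 0]) => [/existsP [k /eqP]|no_zero].
  by exists k.
have all_pos k : (k < n)%N -> 0 < slack k Z.
  move=> lt_kn; rewrite lt_def slack_ge0 ?n_gt0 // andbT.
  by apply: contra no_zero => Zk; apply/existsP; exists (Ordinal lt_kn).
(* An interior maximizer could be moved along w, increasing the supporting function. *)
pose c := cross (dir j) (dir i); pose w := pscale c (dir j).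
have [e e_gt0 He] := exists_small_step (fun k => cross w (dir k)) all_pos.
have XP : inP (padd Z (pscale e w)).
  by apply: inP_of_slack => k lt_kn; rewrite slack_padd cross_pscalel; apply: He.
have := maximizer_supporting XP; rewrite !slack_padd !cross_pscalel.
rewrite cross_self !mulr0 addr0 -/c.
have c_neq0 : c != 0 by rewrite /c cross_swap oppr_eq0.
have c2_gt0 : 0 < c * c by rewrite lt_def mulf_neq0 //= -expr2 sqr_ge0.
have : 0 < slack j Z * (e * (c * c)).
  by apply: mulr_gt0; [case: maximizer_slack_gt0 | apply: mulr_gt0].
lra.
Qed.

Lemma maximizer_unique Z' :
  inP Z' -> slack i Z' * slack j Z' = slack i Z * slack j Z -> Z' = Z.
Proof.
move=> Z'P prod_eq; have [a_gt0 b_gt0] := maximizer_slack_gt0.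
have [eq_i eq_j] := eq_of_prod_eq_supporting a_gt0 b_gt0
  (slack_ge0 i n_gt0 Z'P) (slack_ge0 j n_gt0 Z'P) prod_eq (maximizer_supporting Z'P).
by apply: (eq_of_cross_psub_eq0 nonparallel_ij); rewrite cross_psub_dir ?eq_i ?eq_j subrr.
Qed.

End Maximizer.

Lemma ratio_le_edge s pu pw k l1 l2 :
  (pu < pw < k)%N -> (k < n)%N -> cross (dir (s + pu)) (dir (s + pw)) < 0 -> l1 <= l2 ->
  ratio_le (s + pu) (s + pw) (edge_pt (s + k) l1) (edge_pt (s + k) l2).
Proof.
move=> pwk lt_kn turn_uw l12.
set u := (s + pu)%N; set w := (s + pw)%N; set e := (s + k)%N.
(* psi has the sign of the derivative of slack w / slack u along e.  It is affine in
   the base point Q, and Q = V u.+1 or Q = V w makes one of its two terms vanish. *)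
have psi_ge0 :
    0 <= slack u (V e) * cross (dir e) (dir w) - slack w (V e) * cross (dir e) (dir u).
  have psi_eq Q : slack u (V e) * cross (dir e) (dir w) - slack w (V e) * cross (dir e) (dir u)
      = slack u Q * cross (dir e) (dir w) - slack w Q * cross (dir e) (dir u)
        - cross (dir u) (dir w) * slack e Q.
    by rewrite /slack /cross /=; ring.
  have [eu_le0|eu_gt0] := lerP (cross (dir e) (dir u)) 0.
    rewrite (psi_eq (V u.+1)) slack_V_succ_self mul0r sub0r.
    by have := slack_V_ge0 w u.+1; have := slack_V_ge0 e u.+1; nra.
  have [ew_ge0|ew_lt0] := lerP 0 (cross (dir e) (dir w)).
    rewrite (psi_eq (V w)) slack_V_self mul0r subr0.
    by have := slack_V_ge0 u w; have := slack_V_ge0 e w; nra.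
  have := @cross_dir_wrap s pu pw k ltac:(lia) lt_kn.
  by rewrite cross_swap oppr_lt0 => /(_ eu_gt0); lra.
rewrite /ratio_le !slack_edge_pt.
have : 0 <= l2 - l1 by lra.
by move/mulr_ge0/(_ psi_ge0); nra.
Qed.

Lemma maximizer_on_edge s i j Z : (s < n)%N ->
  maximizes i j Z -> cross (dir i) (dir j) != 0 ->
  exists r l, [/\ (r < n)%N, 0 <= l, l <= 1 & Z = edge_pt (s + r) l].
Proof.
move=> lt_sn Zmax ij; have [ZP _] := Zmax.
have [k _ Zk] := maximizer_on_boundary Zmax ij.
have [l [l_ge0 l_le1 ->]] := on_edge ZP Zk.
exists ((k + n - s) %% n)%N, l; split => //; first by rewrite ltn_pmod ?n_gt0.
have shift := add_shift_mod k lt_sn.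
by rewrite /edge_pt (V_eqmod shift) (dir_eqmod shift).
Qed.

Section NoParallel.
Hypothesis nonparallel : no_parallel_edges n v.

Lemma cross_dir_neq0 x y : x != y %[mod n] -> cross (dir x) (dir y) != 0.
Proof.
move=> xy; have := nonparallel (ltn_pmod x n_gt0) (ltn_pmod y n_gt0) xy.
by rewrite (@dir_eqmod (x %% n)%N x) ?(@dir_eqmod (y %% n)%N y) ?modn_mod.
Qed.

Lemma prec_cross_lt0 i j :
  (i < n)%N -> (j < n)%N -> prec n v i j -> cross (dir i) (dir j) < 0.
Proof.
move=> lt_in lt_jn [neq_ij [t [t_ge1 on_j]]].
have : slack j (padd (V i) (pscale t (dir i))) = 0.
  by rewrite /slack cross_swap on_j oppr0.
rewrite slack_padd cross_pscalel; have := slack_V_ge0 j i.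
have : cross (dir i) (dir j) != 0.
  by apply: cross_dir_neq0; rewrite !modn_small //; apply/eqP.
rewrite lt_neqAle => -> /=; nra.
Qed.

Section Range.
Variables (s L : nat).
Hypotheses (L_lt_n : (L < n)%N) (turn_sL : cross (dir s) (dir (s + L)) < 0).

Lemma range_succ_lt_n : (L.+1 < n)%N.
Proof.
rewrite ltn_neqAle L_lt_n andbT; apply/eqP => SL.
have predL : n.-1 = L by rewrite -SL.
have := cross_dir_pred_lt0 s; rewrite predL cross_swap oppr_lt0.
by move: turn_sL; lra.
Qed.

Lemma range_cross_first q : (0 < q <= L)%N -> cross (dir s) (dir (s + q)) < 0.
Proof.
move=> q_bd; have : cross (dir s) (dir (s + q)) != 0.
  by apply: cross_dir_neq0; rewrite -{1}[s]addn0 eqn_modDl !modn_small //; lia.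
rewrite neq_lt => /orP [//|turn_q].
have := @cross_dir_gt0_mono s q L ltac:(lia) L_lt_n turn_q.
by move: turn_sL; lra.
Qed.

Lemma range_cross p q : (p < q <= L)%N -> cross (dir (s + p)) (dir (s + q)) < 0.
Proof.
case: p => [|p] pq; first by rewrite addn0; apply: range_cross_first; lia.
elim: q pq => [|q IH] pq; first by lia.
have [<-|neq] := eqVneq q p.+1; first by rewrite addnS cross_dir_succ_lt0.
apply: (@cross_halfplane_trans _ (dir s) _ (dir (s + q))).
- by apply: range_cross_first; lia.
- by apply: range_cross_first; lia.
- by apply: range_cross_first; lia.
- by apply/ltW/IH; lia.
- by rewrite addnS cross_dir_succ_lt0.
Qed.

Lemma range_cross_le p q : (p <= q <= L)%N -> cross (dir (s + p)) (dir (s + q)) <= 0.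
Proof.
move=> pq; have [->|neq] := eqVneq p q; first by rewrite cross_self.
by apply/ltW/range_cross; lia.
Qed.

Local Notation rho := (arc_param n v (s + L.+1) (n.-1 - L)).

Section Location.
Variables (pi pj : nat) (a b : R).
Hypotheses (pij : (pi < pj <= L)%N) (a_gt0 : 0 < a) (b_gt0 : 0 < b).

Definition support_slope m :=
  b * cross (dir (s + m)) (dir (s + pi)) + a * cross (dir (s + m)) (dir (s + pj)).
Local Notation sg := support_slope.

Lemma support_slope_lt0 m : (m <= pi)%N -> sg m < 0.
Proof.
move=> le_m_pi; have ha := a_gt0; have hb := b_gt0.
have := @range_cross_le m pi ltac:(lia); have := @range_cross m pj ltac:(lia).
rewrite /sg; nra.
Qed.

Lemma support_slope_gt0 m : (pj <= m <= L)%N -> 0 < sg m.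
Proof.
move=> m_bd; have ha := a_gt0; have hb := b_gt0.
have := @range_cross pi m ltac:(lia); have := @range_cross_le pj m ltac:(lia).
rewrite /sg (cross_swap (dir (s + pi))) (cross_swap (dir (s + pj))); nra.
Qed.

Lemma support_slope_succ m : (0 < m < L)%N -> 0 <= sg m -> 0 < sg m.+1.
Proof.
move=> m_bd; have ha := a_gt0; have hb := b_gt0.
pose h := padd (pscale b (dir (s + pi))) (pscale a (dir (s + pj))).
have sg_h k : sg k = cross (dir (s + k)) h.
  by rewrite /sg /h cross_paddr !cross_pscaler.
rewrite !sg_h -oppr_le0 -oppr_lt0 -!cross_swap => hm.
apply: (cross_halfplane_trans (a := dir s) _ _ _ hm); last first.
- by rewrite addnS cross_dir_succ_lt0.
- by apply: range_cross_first; lia.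
- by apply: range_cross_first; lia.
rewrite /h cross_paddr !cross_pscaler.
have := @range_cross_le 0 pi ltac:(lia); have := @range_cross 0 pj ltac:(lia).
rewrite addn0; nra.
Qed.

End Location.

Hypothesis s_lt_n : (s < n)%N.

Lemma maximizer_range_endpoint pi pj Z r l :
  (pi < pj <= L)%N -> maximizes (s + pi) (s + pj) Z -> (r <= L)%N ->
  0 <= l -> l <= 1 -> Z = edge_pt (s + r) l -> Z = V s \/ Z = V (s + L).+1.
Proof.
move=> pij Zmax le_rL l_ge0 l_le1 eqZ.
have [a_gt0 b_gt0] := maximizer_slack_gt0 Zmax.
(* g is the supporting affine function at Z, evaluated at the vertices of the chain. *)
pose g m := slack (s + pj) Z * slack (s + pi) (V (s + m)) +
            slack (s + pi) Z * slack (s + pj) (V (s + m)).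
pose sg := support_slope pi pj (slack (s + pi) Z) (slack (s + pj) Z).
have g_succ m : g m.+1 = g m + sg m.
  by rewrite /g /sg /support_slope addnS !slack_V_succ; ring.
have g_le m : g m <= 2 * (slack (s + pi) Z * slack (s + pj) Z).
  by move: (maximizer_supporting Zmax (inP_V (s + m))).
have gZ : g r + l * sg r = 2 * (slack (s + pi) Z * slack (s + pj) Z).
  by rewrite /g /sg /support_slope eqZ !slack_edge_pt; ring.
have [[r0 l0]|[rL l1]] := unimodal_max_at_ends g_succ g_le
  (support_slope_lt0 pij a_gt0 b_gt0 (m := 0) isT)
  (support_slope_gt0 pij a_gt0 b_gt0 (m := L) ltac:(lia))
  (fun m => support_slope_succ pij a_gt0 b_gt0 (m := m)) le_rL l_ge0 l_le1 gZ.
- by left; rewrite eqZ r0 l0 addn0 edge_pt0.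
- by right; rewrite eqZ rL l1 edge_pt1.
Qed.

Lemma maximizer_in_rho pi pj Z :
  (pi < pj <= L)%N -> maximizes (s + pi) (s + pj) Z -> exists p, rho Z p.
Proof.
move=> pij Zmax; have SL := range_succ_lt_n.
have [r [l [lt_rn l_ge0 l_le1 eqZ]]] :=
  maximizer_on_edge s_lt_n Zmax (ltr0_neq0 (range_cross pij)).
have [lt_Lr|le_rL] := ltnP L r.
  exists ((r - L.+1)%:R + l); rewrite eqZ (_ : s + r = s + L.+1 + (r - L.+1))%N; last by lia.
  by apply: arc_param_edge_pt => //; lia.
case: (maximizer_range_endpoint pij Zmax le_rL l_ge0 l_le1 eqZ) => ->.
- exists ((n.-1 - L.+1)%:R + 1).
  rewrite (V_eqmod (_ : s = (s + L.+1 + (n.-1 - L.+1)).+1 %[mod n])).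
    by rewrite -edge_pt1; apply: arc_param_edge_pt => //; lia.
  by rewrite -addnS -(modnDr s n); congr modn; lia.
- exists (0%:R + 0); rewrite -addnS.
  have := @arc_param_edge_pt (s + L.+1) (n.-1 - L) 0 0.
  by rewrite addn0 edge_pt0; apply => //; lia.
Qed.

Section RhoRatio.
Variables pu pw : nat.
Hypothesis puw : (pu < pw <= L)%N.
Local Notation ratio := (ratio_le (s + pu) (s + pw)).

Lemma ratio_le_rho_edge x l1 l2 : (x < n.-1 - L)%N -> l1 <= l2 ->
  ratio (edge_pt (s + L.+1 + x) l1) (edge_pt (s + L.+1 + x) l2).
Proof. by move=> lt_x l12; rewrite -addnA; apply: ratio_le_edge (range_cross puw) l12; lia. Qed.

Lemma slack_rho_vertex_gt0 y :
  (0 < y < n.-1 - L)%N -> 0 < slack (s + pu) (V (s + L.+1 + y)).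
Proof. by move=> y_bd; apply: slack_V_gt0; rewrite -?addnS -addnA eqn_modDl !modn_small //; lia. Qed.

Lemma ratio_le_rho_vertices y d : (0 < y)%N -> (y + d < n.-1 - L)%N ->
  ratio (V (s + L.+1 + y)) (V (s + L.+1 + (y + d))).
Proof.
elim: d => [|d IH] y_gt0 lt_yd; first by rewrite addn0 /ratio_le.
apply: (ratio_le_trans (Y := V (s + L.+1 + (y + d)))).
- by apply: slack_rho_vertex_gt0; lia.
- exact: slack_V_ge0.
- exact: slack_V_ge0.
- by apply: IH; lia.
have := @ratio_le_rho_edge (y + d) 0 1 ltac:(lia) ler01.
by rewrite edge_pt0 edge_pt1 -!addnS.
Qed.

Lemma ratio_le_rho X Y p q : rho X p -> rho Y q -> p <= q -> ratio X Y.
Proof.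
have m_gt0 : (0 < n.-1 - L)%N by have := range_succ_lt_n; lia.
move=> /(arc_param_normal m_gt0) [x1 [l1 [lt_x1 l1_ge0 l1_le1 -> ->]]].
move=> /(arc_param_normal m_gt0) [x2 [l2 [lt_x2 l2_ge0 l2_le1 -> ->]]] le_pq.
have [lt_x12|lt_x21|eq_x] := ltngtP x1 x2; last first.
- by move: le_pq; rewrite eq_x => le_pq; apply: ratio_le_rho_edge => //; lra.
- have : (x2.+1%:R : R) <= x1%:R by rewrite ler_nat.
  rewrite -natr1 => le_x21; have l1_0 : l1 = 0 by lra.
  have l2_1 : l2 = 1 by lra.
  have -> : x1 = x2.+1 by apply/eqP; rewrite -(eqr_nat R) -natr1; lra.
  by rewrite l1_0 l2_1 edge_pt0 edge_pt1 addnS /ratio_le.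
have pos_slack l x : 0 <= l -> l <= 1 -> 0 <= slack (s + pu) (edge_pt (s + L.+1 + x) l).
  by move=> *; apply: slack_ge0 n_gt0 (inP_edge_pt _ _ _).
apply: (ratio_le_trans (Y := V (s + L.+1 + x1.+1))); rewrite ?pos_slack //.
- by apply: slack_rho_vertex_gt0; lia.
- by have := @ratio_le_rho_edge x1 l1 1 lt_x1 l1_le1; rewrite edge_pt1 -addnS.
apply: (ratio_le_trans (Y := V (s + L.+1 + x2))); rewrite ?pos_slack ?slack_V_ge0 //.
- by apply: slack_rho_vertex_gt0; lia.
- by have := @ratio_le_rho_vertices x1.+1 (x2 - x1.+1) isT; rewrite subnKC //; apply; lia.
by have := @ratio_le_rho_edge x2 0 l2 lt_x2 l2_ge0; rewrite edge_pt0.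
Qed.

End RhoRatio.

Lemma maximizer_rho_monotone pi pj pi' pj' Z Z' p p' :
  (pi < pj <= L)%N -> (pi' < pj' <= L)%N -> (pi <= pi')%N -> (pj <= pj')%N ->
  maximizes (s + pi) (s + pj) Z -> maximizes (s + pi') (s + pj') Z' ->
  rho Z p -> rho Z' p' -> p' < p -> Z' = Z.
Proof.
move=> pij pij' ii' jj' Zmax Z'max Zp Z'p' lt_p.
have ratio_rho (u w : nat) : (u <= w)%N -> (w <= L)%N -> ratio_le (s + u) (s + w) Z' Z.
  move=> uw wL; have [->|neq_uw] := eqVneq u w; first by rewrite /ratio_le mulrC.
  by apply: (ratio_le_rho (pu := u) (pw := w) _ Z'p' Zp (ltW lt_p)); lia.
have [[ZP ZmaxP] [Z'P Z'maxP]] := (Zmax, Z'max).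
have [a'_gt0 b'_gt0] := maximizer_slack_gt0 Z'max.
apply: (maximizer_unique Zmax (ltr0_neq0 (range_cross pij)) Z'P).
apply: (prod_eq_of_exchange _ _ _ _ (ltW a'_gt0) (ltW b'_gt0) (mulr_gt0 a'_gt0 b'_gt0)
  (ZmaxP _ Z'P) (Z'maxP _ ZP) (ratio_rho _ _ ii' _) (ratio_rho _ _ jj' _));
  rewrite ?slack_ge0 ?n_gt0 //; lia.
Qed.

End Range.

Section Statement.
Variables s t : nat.
Hypotheses (lt_sn : (s < n)%N) (lt_tn : (t < n)%N) (prec_st : prec n v s t).
Local Notation pos i := ((i + n - s) %% n)%N.
Local Notation L := (pos t).

Lemma dir_pos i : dir (s + pos i) = dir i.
Proof. exact/dir_eqmod/add_shift_mod. Qed.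

Lemma pos_lt_n i : (pos i < n)%N.
Proof. by rewrite ltn_pmod ?n_gt0. Qed.

Lemma range_turn : cross (dir s) (dir (s + L)) < 0.
Proof. by rewrite dir_pos; apply: prec_cross_lt0. Qed.

Lemma prec_pos_lt i j :
  in_range n s t i -> in_range n s t j -> prec n v i j -> (pos i < pos j)%N.
Proof.
move=> [lt_in ri] [lt_jn rj] ij; have := prec_cross_lt0 lt_in lt_jn ij.
rewrite -(dir_pos i) -(dir_pos j); case: ltngtP => // [lt_ji|->]; last first.
  by rewrite cross_self ltxx.
have := @range_cross s L (pos_lt_n t) range_turn (pos j) (pos i) ltac:(lia).
by rewrite cross_swap; lra.
Qed.

Lemma preceq_pos_le i j :
  in_range n s t i -> in_range n s t j -> preceq n v i j -> (pos i <= pos j)%N.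
Proof. by move=> ri rj [->//|ij]; apply/ltnW/prec_pos_lt. Qed.

Lemma inS_pos i j : inS n v s t i j -> (pos i < pos j <= L)%N.
Proof. by move=> [ij [ri rj]]; rewrite prec_pos_lt //; case: rj. Qed.

Lemma is_Z_maximizes_pos i j Z : is_Z n v i j Z -> maximizes (s + pos i) (s + pos j) Z.
Proof.
move=> /maximizes_of_is_Z [ZP Zmax]; split=> // X XP.
by rewrite !(@slack_eqmod (s + pos _) _ _ (add_shift_mod _ lt_sn)); apply: Zmax.
Qed.

Lemma arc_param_rho X p :
  arc_param n v (s + L.+1) (n.-1 - L) X p -> arc_param n v (rho_start t) (rho_len n s t) X p.
Proof.
rewrite rho_lenE //; apply: arc_param_eqmod.
by rewrite addnS -addn1 -modnDml add_shift_mod // modnDml addn1.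
Qed.

Lemma maximizers_on_rho i j Z : inS n v s t i j -> is_Z n v i j Z -> on_rho n v s t Z.
Proof.
move=> /inS_pos ij /is_Z_maximizes_pos Zmax.
have [p Zp] := maximizer_in_rho (pos_lt_n t) range_turn lt_sn ij Zmax.
by exists p; apply: arc_param_rho.
Qed.

Lemma maximizers_rho_le i j i' j' Z Z' :
  inS n v s t i j -> inS n v s t i' j' -> preceq n v i i' -> preceq n v j j' ->
  is_Z n v i j Z -> is_Z n v i' j' Z' -> rho_le n v s t Z Z'.
Proof.
move=> Sij Sij' ii' jj' /is_Z_maximizes_pos Zmax /is_Z_maximizes_pos Z'max.
have [[_ [ri rj]] [_ [ri' rj']]] := (Sij, Sij').
have [p Zp] := maximizer_in_rho (pos_lt_n t) range_turn lt_sn (inS_pos Sij) Zmax.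
have [p' Z'p'] := maximizer_in_rho (pos_lt_n t) range_turn lt_sn (inS_pos Sij') Z'max.
have [le_pp'|lt_p'p] := lerP p p'.
  by exists p, p'; split; [|split] => //; apply: arc_param_rho.
have -> := maximizer_rho_monotone (pos_lt_n t) range_turn lt_sn (inS_pos Sij) (inS_pos Sij')
  (preceq_pos_le ri ri' ii') (preceq_pos_le rj rj' jj') Zmax Z'max Zp Z'p' lt_p'p.
by exists p, p; split; [|split] => //; apply: arc_param_rho.
Qed.

End Statement.

End NoParallel.

End Convex.

End Polygon.

Theorem lemma6 (R : rcfType) (n : nat) (v : nat -> pt R) (s t : nat) :
  convex_cw_polygon n v -> no_parallel_edges n v ->
  (s < n)%N -> (t < n)%N -> preceq n v s t ->
  (forall i j (Z : pt R), inS n v s t i j -> is_Z n v i j Z -> on_rho n v s t Z) /\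
  (forall i j i' j' (Z Z' : pt R),
     inS n v s t i j -> inS n v s t i' j' ->
     preceq n v i i' -> preceq n v j j' ->
     is_Z n v i j Z -> is_Z n v i' j' Z' -> rho_le n v s t Z Z').
Proof.
move=> convex nonparallel lt_sn lt_tn [<-|prec_st].
  by split=> [i j Z /(inS_diag_empty lt_sn) | i j i' j' Z Z' /(inS_diag_empty lt_sn)].
split; [exact: maximizers_on_rho | exact: maximizers_rho_le].
Qed.
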